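(* Let $m\ge 38$ be even and let $G$ be a graph with maximum spectral radius among all $H(4,3)$-free graphs with $m$ edges and no isolated vertices. Let $\mathbf{x}$ be the Perron vector of $G$, $u^*$ a vertex maximizing $x_{u^*}$, $N = N(u^* )$, and $A_+ = \{v\in N : d_N(v)\ge 1\}$. Then the induced subgraph $G[A_+]$ is connected.
   Context: All graphs are simple and undirected; $\rho(G)$ is the largest adjacency eigenvalue and the Perron vector is the positive unit eigenvector for $\rho(G)$ (the extremal $G$ is connected). $H(4,3)$ is the graph formed by a cycle of length $4$ and a triangle sharing exactly one common vertex. $N(v)$ denotes the neighbourhood of $v$, $d_S(v)=|N(v)\cap S|$, and $G[S]$ is the subgraph induced by $S$. *)

From HB Require Import structures.
From mathcomp Require Import all_boot all_order all_algebra.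
From mathcomp Require Import reals.
Set Implicit Arguments. Unset Strict Implicit. Unset Printing Implicit Defensive.
Import Order.TTheory GRing.Theory Num.Theory.
Local Open Scope ring_scope.

Definition simple_graph (n : nat) (e : rel 'I_n) : Prop :=
  (forall i j, e i j = e j i) /\ (forall i, ~~ e i i).

Definition edge_set (n : nat) (e : rel 'I_n) : {set {set 'I_n}} :=
  [set [set x; y] | x in 'I_n, y in 'I_n & e x y].

Definition num_edges (n : nat) (e : rel 'I_n) : nat := #|edge_set e|.

Definition no_isolated (n : nat) (e : rel 'I_n) : Prop :=
  forall v, exists w, e v w.

(* H(4,3): 4-cycle 0-1-2-3-0 and triangle 0-4-5-0 sharing vertex 0. *)
Definition h43_edge (i j : 'I_6) : bool :=
  let a := nat_of_ord i in let b := nat_of_ord j in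
  [|| (a == 0) && (b == 1), (a == 1) && (b == 2), (a == 2) && (b == 3),
      (a == 3) && (b == 0), (a == 0) && (b == 4), (a == 4) && (b == 5)
    | (a == 5) && (b == 0)]%N.

Definition contains_H43 (n : nat) (e : rel 'I_n) : Prop :=
  exists f : 'I_6 -> 'I_n, injective f /\ forall i j, h43_edge i j -> e (f i) (f j).

Definition H43_free (n : nat) (e : rel 'I_n) : Prop := ~ contains_H43 e.

Definition adj (R : realType) (n : nat) (e : rel 'I_n) : 'M[R]_n :=
  \matrix_(i, j) (e i j)%:R.

Definition is_spectral_radius (R : realType) (n : nat) (e : rel 'I_n) (r : R) : Prop :=
  eigenvalue (adj R e) r /\ forall a : R, eigenvalue (adj R e) a -> a <= r.

Definition perron_vector (R : realType) (n : nat) (e : rel 'I_n) (r : R)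
    (x : 'cV[R]_n) : Prop :=
  adj R e *m x = r *: x /\ (forall i, 0 < x i 0) /\ \sum_i (x i 0) ^+ 2 = 1.

Definition extremal_H43 (R : realType) (m n : nat) (e : rel 'I_n) (rho : R) : Prop :=
  [/\ simple_graph e, num_edges e = m, no_isolated e & H43_free e] /\
  is_spectral_radius e rho /\
      (forall (n' : nat) (e' : rel 'I_n') (r' : R),
        simple_graph e' -> num_edges e' = m -> no_isolated e' -> H43_free e' ->
        is_spectral_radius e' r' -> r' <= rho).

Definition nbhd (n : nat) (e : rel 'I_n) (u : 'I_n) : {set 'I_n} := [set v | e u v].

Definition Aplus (n : nat) (e : rel 'I_n) (N : {set 'I_n}) : {set 'I_n} :=
  [set v in N | [exists w in N, e v w]].

Definition induced_connected (n : nat) (e : rel 'I_n) (S : {set 'I_n}) : Prop :=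
  forall a b, a \in S -> b \in S ->
    connect [rel x y | [&& e x y, x \in S & y \in S]] a b.

From HB Require Import structures.
From mathcomp Require Import all_boot all_order all_algebra.
From mathcomp Require Import reals polyrcf.
From mathcomp Require Import ring lra zify.
Set Implicit Arguments. Unset Strict Implicit. Unset Printing Implicit Defensive.
Import Order.TTheory GRing.Theory Num.Theory.
Local Open Scope ring_scope.

(* Suppose G[A+] is disconnected, with N = N(u* ). Every w in N then has at
   most one neighbour in N, hence
     rho^2 x_u* = sum_(w in N) d_N(w) x_w + sum_(v in N, w notin N, vw in E) x_w
               <= rho x_u* + e(N, V - N) x_u*,
   and as G[N] has at least two edges, rho^2 - rho <= m - 2.  But with
   m = 2t + 2 the graph K_1 + (K_{1,t} u K_1) is H(4,3)-free with m edges and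
   has an eigenvalue lambda > 1 with lambda^2 - lambda > 2t = m - 2, so the
   extremality of G gives rho >= lambda, a contradiction. *)

Lemma exists_spectral_radius_ge (R : realType) n (A : 'M[R]_n) a :
  eigenvalue A a ->
  exists r, [/\ eigenvalue A r, forall b, eigenvalue A b -> b <= r & a <= r].
Proof.
move=> Aa; pose r := \big[Num.max/a]_(b <- rootsR (char_poly A)) b.
have chiA_roots := roots_on_rootsR (monic_neq0 (char_poly_monic A)).
exists r; split.
- rewrite /r big_seq; apply: (big_ind (eigenvalue A)) => // [b c Ab Ac|b rootsR_b].
    by case: leP.
  by rewrite eigenvalue_root_char (roots_on_root chiA_roots rootsR_b).
- move=> b Ab; apply: le_bigmax_seq => //.
  by apply: (root_roots_on chiA_roots); rewrite -?eigenvalue_root_char.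
- exact: bigmax_ge_id.
Qed.

Lemma contains_H43_of n (e : rel 'I_n) (c v1 v2 v3 v4 v5 : 'I_n) :
  uniq [:: c; v1; v2; v3; v4; v5] ->
  e c v1 -> e v1 v2 -> e v2 v3 -> e v3 c -> e c v4 -> e v4 v5 -> e v5 c ->
  contains_H43 e.
Proof.
move=> vs_uniq *; pose vs := [:: c; v1; v2; v3; v4; v5].
exists (fun i : 'I_6 => nth c vs i); split.
  by move=> i j /eqP; rewrite nth_uniq // => /eqP /val_inj.
by move=> [[|[|[|[|[|[|[|?]]]]]]] ?] [[|[|[|[|[|[|[|?]]]]]]] ?].
Qed.

Lemma H43_free_of_vertex_cover2 n (e : rel 'I_n) (p q : 'I_n) :
  (forall i j, e i j -> (i \in [:: p; q]) || (j \in [:: p; q])) -> H43_free e.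
Proof.
move=> cover [f [f_inj f_hom]]; pose pq := [:: p; q].
have no3_in_pq : forall i j k : 'I_6,
    f i \in pq -> f j \in pq -> f k \in pq -> uniq [:: i; j; k] -> False.
  move=> i j k fi fj fk; rewrite -(map_inj_uniq f_inj) => /uniq_leq_size fijk.
  suff: (3 <= size pq)%N by [].
  by apply: fijk => y; rewrite !in_cons in_nil orbF => /or3P[]/eqP->.
have cov (i j : 'I_6) : h43_edge i j -> (f i \in pq) || (f j \in pq).
  by move=> /f_hom /cover.
case f0: (f 0 \in pq).
  case/orP: (cov 1 2 isT) => f12; case/orP: (cov 4 5 isT) => f45;
    exact: (no3_in_pq _ _ _ f0 f12 f45 isT).
move: (cov 0 1 isT) (cov 3 0 isT) (cov 0 4 isT); rewrite f0 /= orbF => f1 f3 f4.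
exact: (no3_in_pq _ _ _ f1 f3 f4 isT).
Qed.

Definition induced n (e : rel 'I_n) (S : {set 'I_n}) : rel 'I_n :=
  [rel x y | [&& e x y, x \in S & y \in S]].

Definition deg_in n (e : rel 'I_n) (S : {set 'I_n}) (v : 'I_n) : nat :=
  #|[set w in S | e v w]|.

Definition boundary n (e : rel 'I_n) (S : {set 'I_n}) : {set 'I_n * 'I_n} :=
  [set z | [&& z.1 \in S, z.2 \notin S & e z.1 z.2]].

Lemma boundary_add2_le_num_edges n (e : rel 'I_n) (S : {set 'I_n}) p p' q q' :
  p \in S -> p' \in S -> q \in S -> q' \in S -> e p p' -> e q q' ->
  [set p; p'] != [set q; q'] -> (#|boundary e S| + 2 <= num_edges e)%N.
Proof.
move=> pS p'S qS q'S pp' qq' pp'_qq'.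
pose edge (z : 'I_n * 'I_n) := [set z.1; z.2].
have edge_inj : {in boundary e S &, injective edge}.
  move=> [v w] [v' w']; rewrite !inE /= => /and3P[vS wS _] /and3P[v'S w'S _] vw.
  have /set2P[/= wv'|/= ww'] : w \in edge (v', w') by rewrite -vw set22.
    by rewrite wv' v'S in wS.
  have /set2P[/= vv'|/= vw'] : v \in edge (v', w') by rewrite -vw set21.
    by rewrite vv' ww'.
  by rewrite -vw' vS in w'S.
have inner_out : [disjoint edge @: boundary e S & [set [set p; p']; [set q; q']]].
  apply/pred0P => E /=; apply/negP => /andP[/imsetP[[v w] + ->]].
  rewrite inE /= => /and3P[_ wS _] /set2P[] vwE;
  move: (set22 v w); rewrite -[[set v; w]]/(edge (v, w)) vwE => /set2P[] wE;
  by rewrite wE ?pS ?p'S ?qS ?q'S in wS.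
have sub_edges : edge @: boundary e S :|: [set [set p; p']; [set q; q']]
                   \subset edge_set e.
  apply/subsetP => E /setUP[/imsetP[[v w] + ->]|/set2P[]->]; last 2 first.
  - by apply/imset2P; exists p p'; rewrite ?inE.
  - by apply/imset2P; exists q q'; rewrite ?inE.
  by rewrite inE => /and3P[_ _ vw]; apply/imset2P; exists v w; rewrite ?inE.
have [_] := leq_card_setU (edge @: boundary e S) [set [set p; p']; [set q; q']].
rewrite inner_out => /eqP card_edges.
have -> : 2%N = #|[set [set p; p']; [set q; q']]| by rewrite cards2 pp'_qq'.
by rewrite -(card_in_imset edge_inj) -card_edges subset_leq_card.
Qed.

Section PerronVector.

Variables (R : realType) (n : nat) (e : rel 'I_n) (rho : R) (x : 'cV[R]_n).
Hypothesis x_perron : perron_vector e rho x.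

Lemma perron_eq v : rho * x v 0 = \sum_(w | e v w) x w 0.
Proof.
have [/(congr1 (fun y : 'cV[R]_n => y v 0)) + _] := x_perron.
rewrite !mxE => <-; rewrite [RHS]big_mkcond; apply: eq_bigr => w _.
by rewrite mxE; case: (e v w); rewrite ?mul1r ?mul0r.
Qed.

Variable u : 'I_n.
Hypotheses (x_max : forall v, x v 0 <= x u 0) (e_sym : forall i j, e i j = e j i).

Let N := nbhd e u.

Lemma perron_sq_le_boundary :
  (forall w, w \in N -> (deg_in e N w <= 1)%N) ->
  rho ^+ 2 <= rho + #|boundary e N|%:R.
Proof.
move=> deg_le1.
have [_ [x_pos _]] := x_perron.
have rho_xu : rho * x u 0 = \sum_(v in N) x v 0.
  by rewrite perron_eq; apply: eq_bigl => v; rewrite inE.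
have inner_le : \sum_(v in N) \sum_(w | e v w && (w \in N)) x w 0 <= rho * x u 0.
  rewrite (exchange_big_dep (mem N)) => [|? ? _ /andP[] //].
  rewrite rho_xu; apply: ler_sum => w wN.
  rewrite (eq_bigl (mem [set v in N | e w v])); last first.
    by move: wN => /[!inE] uw v; rewrite !inE uw andbT (e_sym v).
  by rewrite sumr_const -[leRHS]mulr1n ler_wpMn2l ?deg_le1 ?ltW.
have outer_le : \sum_(v in N) \sum_(w | e v w && (w \notin N)) x w 0
                  <= #|boundary e N|%:R * x u 0.
  apply: le_trans (_ : \sum_(v in N) \sum_(w | e v w && (w \notin N)) x u 0 <= _).
    by apply: ler_sum => v _; apply: ler_sum => w _; exact: x_max.
  rewrite pair_big_dep (eq_bigl (mem (boundary e N))) ?sumr_const ?mulr_natl //.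
  by move=> [v w]; rewrite !inE /= [e v w && _]andbC.
have : rho ^+ 2 * x u 0 <= (rho + #|boundary e N|%:R) * x u 0.
  rewrite expr2 -mulrA rho_xu mulr_sumr mulrDl.
  under eq_bigr => v _ do rewrite perron_eq (bigID (mem N)) /=.
  by rewrite big_split /= lerD.
by rewrite ler_pM2r.
Qed.

End PerronVector.

Section DisconnectedAplus.

Variables (n : nat) (e : rel 'I_n) (u a b : 'I_n).
Hypotheses (e_sym : forall i j, e i j = e j i) (e_irr : forall i, ~~ e i i).

Let N := nbhd e u.
Let A := Aplus e N.
Let r := induced e A.

Hypotheses (aA : a \in A) (bA : b \in A) (ab_disc : ~~ connect r a b).

Lemma Aplus_edge p q : p \in N -> q \in N -> e p q -> p \in A.
Proof. by move=> pN qN epq; rewrite inE pN; apply/existsP; exists q; rewrite qN. Qed.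

Lemma Aplus_sub_nbhd p : p \in A -> p \in N.
Proof. by rewrite inE => /andP[]. Qed.

Lemma exists_Aplus_neighbour p : p \in A -> exists2 q, q \in A & e p q.
Proof.
rewrite inE => /andP[pN /existsP[q /andP[qN epq]]]; exists q => //.
by apply: (Aplus_edge qN pN); rewrite e_sym.
Qed.

Lemma induced_connect_sym : connect_sym r.
Proof.
apply: sym_connect_sym => p q; rewrite /r /induced /= e_sym.
by congr (_ && _); exact: andbC.
Qed.

Lemma nbhd_edge_connect p q : p \in N -> q \in N -> e p q -> connect r p q.
Proof.
move=> pN qN pq; apply: connect1.
by rewrite /r /induced /= pq (Aplus_edge pN qN pq) (Aplus_edge qN pN) // e_sym.
Qed.

Lemma exists_disconnected_from w : exists2 z, z \in A & ~~ connect r w z.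
Proof.
have [wa|] := boolP (connect r w a); last by exists a.
exists b => //; apply: contra ab_disc => wb.
by rewrite (connect_trans _ wb) // induced_connect_sym.
Qed.

Hypothesis e_free : H43_free e.

(* Two neighbours c, y of w inside N would close the 4-cycle u c w y, and any
   z in another component of G[A+] spans a triangle with u and its partner. *)
Lemma deg_in_nbhd_le1 w : w \in N -> (deg_in e N w <= 1)%N.
Proof.
move=> wN; apply/card_le1_eqP => c y /setIdP[cN wc] /setIdP[yN wy].
apply/eqP/negPn/negP => cy.
have [z zA nwz] := exists_disconnected_from w.
have [z' z'A zz'] := exists_Aplus_neighbour zA.
have nwz' : ~~ connect r w z'.
  apply: contra nwz => wz'; rewrite (connect_trans wz') // induced_connect_sym.
  by apply: nbhd_edge_connect; rewrite ?Aplus_sub_nbhd.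
have edge_neq p q : e p q -> p != q by apply: contraTneq => ->.
have Nu p : p \in N -> e u p by rewrite inE.
have conn_w : {in [:: c; w; y], forall p, connect r w p}.
  by move=> p; rewrite !inE => /or3P[]/eqP->; rewrite ?connect0 ?nbhd_edge_connect.
apply: e_free; apply: (contains_H43_of (c := u) (v1 := c) (v2 := w) (v3 := y)
  (v4 := z) (v5 := z')).
- rewrite -[[:: c; _; _; _; _]]/([:: c; w; y] ++ [:: z; z']) cons_uniq cat_uniq.
  apply/and4P; split.
  - have allN : all (mem N) ([:: c; w; y] ++ [:: z; z']).
      by rewrite /= cN wN yN !Aplus_sub_nbhd.
    by apply: contra (e_irr u) => /(allP allN)/Nu.
  - by rewrite /= !inE negb_or !(eq_sym c) cy !edge_neq.
  - apply/hasPn => p; rewrite mem_seq2 => /orP[]/eqP->;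
      [apply: contra nwz | apply: contra nwz']; exact: conn_w.
  - by rewrite /= inE edge_neq.
all: by rewrite ?(e_sym _ u) ?(e_sym c) ?Nu // Aplus_sub_nbhd.
Qed.

Lemma nbhd_boundary_add2_le_num_edges :
  (#|boundary e N| + 2 <= num_edges e)%N.
Proof.
have [a' a'A aa'] := exists_Aplus_neighbour aA.
have [b' b'A bb'] := exists_Aplus_neighbour bA.
apply: (@boundary_add2_le_num_edges _ _ _ a a' b b');
  rewrite ?Aplus_sub_nbhd //.
apply: contraNneq ab_disc => aa'_bb'.
have : b \in [set a; a'] by rewrite aa'_bb' set21.
by case/set2P=> ->; rewrite ?connect0 // nbhd_edge_connect ?Aplus_sub_nbhd.
Qed.

End DisconnectedAplus.

Lemma num_edges_ltn_pairs n (e : rel 'I_n) : simple_graph e ->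
  num_edges e = (\sum_(i < n) \sum_(j < n) ((i < j) && e i j))%N.
Proof.
move=> [e_sym e_irr].
set D := [set z : 'I_n * 'I_n | (z.1 < z.2)%N && e z.1 z.2].
pose edge (z : 'I_n * 'I_n) := [set z.1; z.2].
have edge_inj : {in D &, injective edge}.
  move=> [v w] [v' w']; rewrite !inE /= => /andP[vw _] /andP[v'w' _] E.
  have /set2P[/= vv'|/= vw'] : v \in edge (v', w') by rewrite -E set21.
    have /set2P[/= wv'|/= ww'] : w \in edge (v', w') by rewrite -E set22.
      by rewrite vv' wv' ltnn in vw.
    by rewrite vv' ww'.
  have /set2P[/= wv'|/= ww'] : w \in edge (v', w') by rewrite -E set22.
    by rewrite vw' wv' ltnNge (ltnW v'w') in vw.
  by rewrite vw' ww' ltnn in vw.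
rewrite /num_edges; have -> : edge_set e = edge @: D.
  apply/setP => E; apply/imset2P/imsetP => [[v w _]|[[v w]]].
    rewrite inE => vw ->; case: (ltngtP v w) => [lt_vw|lt_wv|/val_inj eq_vw].
    - by exists (v, w); rewrite // inE /= lt_vw.
    - by exists (w, v); rewrite /edge 1?setUC // inE /= lt_wv e_sym.
    - by rewrite eq_vw (negbTE (e_irr w)) in vw.
  by rewrite inE /= => /andP[_ vw] ->; exists v w; rewrite ?inE.
rewrite (card_in_imset edge_inj) -sum1dep_card pair_big_dep /=.
by rewrite big_mkcond; apply: eq_bigr => -[v w] _; case: ifP.
Qed.

(* The edges of K_1 + (K_{1,k-3} u K_1) on {0, ..., k-1}: vertex 0 is joined
   to all vertices, vertex 1 to all vertices but 2. *)
Definition cone_star_edge (a b : nat) : bool :=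
  [|| (a == 0) && (b != 0), (b == 0) && (a != 0), (a == 1) && (2 < b)
    | (b == 1) && (2 < a)]%N.

Definition cone_star k : rel 'I_k := fun i j => cone_star_edge i j.
Arguments cone_star : clear implicits.

Lemma cone_star_simple k : simple_graph (cone_star k).
Proof.
split=> [i j|i]; rewrite /cone_star /cone_star_edge.
  by case: (nat_of_ord i) => [|[|[|?]]]; case: (nat_of_ord j) => [|[|[|?]]].
by case: (nat_of_ord i) => [|[|[|?]]].
Qed.

Lemma cone_star_no_isolated t : no_isolated (cone_star t.+3).
Proof.
move=> v; have [v0|v_gt0] := posnP v.
  by exists (lift ord0 ord0); rewrite /cone_star v0.
by exists ord0; rewrite /cone_star /cone_star_edge /= -lt0n v_gt0 orbT.
Qed.

Lemma cone_star_H43_free t : H43_free (cone_star t.+3).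
Proof.
apply: (H43_free_of_vertex_cover2 (p := ord0) (q := lift ord0 ord0)) => i j.
rewrite !inE /cone_star /cone_star_edge -!val_eqE /=.
by case: (nat_of_ord i) => [|[|[|?]]]; case: (nat_of_ord j) => [|[|[|?]]].
Qed.

Lemma sum_ord_split3 t (F : nat -> nat) :
  (\sum_(i < t.+3) F i = F 0 + F 1 + F 2 + \sum_(i < t) F i.+3)%N.
Proof. by rewrite 3!big_ord_recl !addnA. Qed.

Lemma cone_star_num_edges t : num_edges (cone_star t.+3) = (t.*2 + 2)%N.
Proof.
rewrite num_edges_ltn_pairs; last exact: cone_star_simple.
rewrite (sum_ord_split3 t (fun a => \sum_(j < t.+3) ((a < j) && cone_star_edge a j))%N).
rewrite [X in (_ + X)%N]big1 => [|i _]; last first.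
  by apply: big1 => -[[|[|j]] ?]; rewrite /cone_star_edge /= ?andbF.
rewrite !(sum_ord_split3 t (fun j => (_ < j) && cone_star_edge _ j)%N) /=.
rewrite big1_eq sum_nat_const card_ord muln1; lia.
Qed.

Lemma cone_star_eigenvalue (R : realType) t (a : R) : 0 < a ->
  (a ^+ 2 - t%:R - 1) * (a ^+ 2 - t%:R) = (a + t%:R) ^+ 2 ->
  eigenvalue (adj R (cone_star t.+3)) a.
Proof.
set T : R := t%:R => a_gt0 quartic.
have a_neq0 : a != 0 by rewrite gt_eqF.
pose y0 := a + T; pose y1 := a ^+ 2 - T - 1.
pose y k := if k == 0%N then y0 else if k == 1%N then y1
            else if k == 2%N then y0 / a else (y0 + y1) / a.
apply/eigenvalueP; exists (\row_(j < t.+3) y j); last first.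
  have T_ge0 : 0 <= T by rewrite ler0n.
  apply/negP => /eqP/rowP/(_ ord0); rewrite !mxE /y /= => /eqP.
  by rewrite gt_eqF // /y0; lra.
apply/rowP => j; rewrite !mxE.
under eq_bigr => i _ do rewrite !mxE.
rewrite 3!big_ord_recl.
under eq_bigr => i _ do rewrite /= /cone_star /cone_star_edge /=.
case: j => -[|[|[|j]]] j_lt; rewrite /cone_star /cone_star_edge /y /=.
all: rewrite ?mulr1 ?mulr0 ?add0r ?big1_eq ?addr0 ?sumr_const ?card_ord.
- by rewrite -mulr_natr /y0 /y1; field.
- have -> : y0 + (y0 + y1) / a *+ t = a * y1 + (y0 * y0 - y1 * (a ^+ 2 - T)) / a.
    by rewrite -mulr_natr /y0 /y1; field.
  by rewrite /y0 /y1 quartic expr2 subrr mul0r addr0.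
- by rewrite mulrC divfK.
- by rewrite mulrC divfK.
Qed.

Lemma exists_cone_star_root (R : rcfType) (T : R) : 0 <= T ->
  exists a, [/\ (a ^+ 2 - T - 1) * (a ^+ 2 - T) = (a + T) ^+ 2, 1 < a
              & T *+ 2 < a ^+ 2 - a].
Proof.
move=> T_ge0.
pose p : {poly R} := ('X^2 - (T + 1)%:P) * ('X^2 - T%:P) - ('X + T%:P) ^+ 2.
have pE b : p.[b] = (b ^+ 2 - T - 1) * (b ^+ 2 - T) - (b + T) ^+ 2.
  by rewrite !hornerE opprD addrA.
have p_lt0 b : 1 <= b -> b ^+ 2 - b <= T *+ 2 -> p.[b] < 0.
  by rewrite pE mulr2n => b_ge1 b_small; nra.
have p_sign : p.[1] * p.[T + 2] < 0.
  have p1 : p.[1] < 0 by rewrite p_lt0 // expr1n subrr mulrn_wge0.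
  have p2 : 0 < p.[T + 2] by rewrite pE; nra.
  by rewrite pmulr_llt0.
have le_1T2 : 1 <= T + 2 by lra.
have [a /[!in_itv] /andP[a_gt1 _] /rootP pa0] := poly_ivtoo le_1T2 p_sign.
exists a; split=> //; first by apply/eqP; rewrite -subr_eq0 -pE pa0.
by rewrite ltNge; apply/negP => /(p_lt0 a (ltW a_gt1)); rewrite pa0 ltxx.
Qed.

Lemma extremal_H43_rho_gt (R : realType) t n (e : rel 'I_n) (rho : R) :
  extremal_H43 (t.*2 + 2) e rho -> t.*2%:R < rho ^+ 2 - rho.
Proof.
move=> [_ [_ rho_max]].
have [a [quartic a_gt1 a_big]] := exists_cone_star_root (ler0n R t).
have a_eig := cone_star_eigenvalue (lt_trans ltr01 a_gt1) quartic.
have [r [r_eig r_max a_le_r]] := exists_spectral_radius_ge a_eig.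
have := rho_max _ _ r (cone_star_simple _) (@cone_star_num_edges t)
  (@cone_star_no_isolated t) (@cone_star_H43_free t) (conj r_eig r_max).
rewrite -muln2 natrM mulr_natr; nra.
Qed.

Theorem claim2 (R : realType) (m n : nat) (e : rel 'I_n) (rho : R)
    (x : 'cV[R]_n) (ustar : 'I_n) :
  (38 <= m)%N -> ~~ odd m ->
  extremal_H43 m e rho ->
  perron_vector e rho x ->
  (forall v, x v 0 <= x ustar 0) ->
  induced_connected e (Aplus e (nbhd e ustar)).
Proof.
move=> m_ge38 m_even extremal x_perron x_max a b aA bA.
apply/negPn/negP => ab_disc.
have [t m_eq] : exists t, m = (t.*2 + 2)%N.
  exists (m./2).-1; move: (odd_double_half m); rewrite (negbTE m_even); lia.
subst m; have rho_gt := extremal_H43_rho_gt extremal.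
have [[[e_sym e_irr] m_edges _ e_free] _] := extremal.
have deg_le1 := deg_in_nbhd_le1 e_sym e_irr aA bA ab_disc e_free.
have rho_le := perron_sq_le_boundary x_perron x_max e_sym deg_le1.
have := nbhd_boundary_add2_le_num_edges e_sym aA bA ab_disc.
rewrite m_edges leq_add2r -(ler_nat R) => boundary_le; lra.
Qed.
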